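(* Let $0<a,b<1$, let $f\ge3$ be an integer, and let $\overline w_{m,n}$ ($m,n\ge0$, $m\ne n$) be as defined in the context. For $0\le m\le n-2$ put $[\overline w]_{m,n}:=\overline w_{m,n}\overline w_{m+1,n+1}-\overline w_{m,n+1}\overline w_{m+1,n}$. Then (with all indices nonnegative): 1. $[\overline w]_{f-\ell,f+j}=a^2r^2z^4(1-a)(1-b)x_a^{\ell-2}x(a,b)x_b^{j-1}$ for $\ell\ge2$, $j\ge1$; 2. $[\overline w]_{f-\ell,f}=a^2r^2z^4(1-a)(1-b)x_a^{\ell-2}$ for $\ell\ge2$; 3. $[\overline w]_{f-1,f+j}=b^2r^2z^4(1-a)(1-b)x_b^{j-1}$ for $j\ge1$; 4. $[\overline w]_{m,m+\ell}=a^2r^2z^4(1-a)^2x_a^{\ell-2}$ for $\ell\ge2$, $m+\ell\le f-1$; 5. $[\overline w]_{m,m+j}=b^2r^2z^4(1-b)^2x_b^{j-2}$ for $f\le m$, $j\ge2$.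
   Context: Let $r,y,z$ be indeterminates. For $c\in(0,1)$: $\omega_c:=1-(1-c)^2r^2y^2z^2$, $\tau_c:=1+(1-c)^2r^2z^2y(1-y)$, $x_c:=c^2z^2\tau_c^2$, $\beta_c:=1+z^2(c^2-(1-c)^2r^2(y^2+c^2(1-y)^2z^2))$; $w^*_0(c):=(\beta_c-\omega_c)/x_c$, $w^*_1(c):=1$, $w^*_{n+1}(c):=\beta_cw^*_n(c)-x_cw^*_{n-1}(c)$ ($n\ge1$). Also $\omega(a,b):=1-(1-a)(1-b)r^2y^2z^2$, $\tau(a,b):=1+(1-a)(1-b)r^2z^2y(1-y)$, $x(a,b):=b^2z^2\tau(a,b)^2$, $x(b,a):=a^2z^2\tau(a,b)^2$, $\beta(a,b):=\beta_b-(b-a)b^2(1-b)r^2(1-y)^2z^4$, $\beta(b,a):=\beta_a-(a-b)a^2(1-a)r^2(1-y)^2z^4$. Define $\overline w_{m,m+1}=\overline w_{m+1,m}:=1$ for $m\ge0$, and for $n-m\ge2$ (all indices $\ge0$): upward: (U1) $\overline w_{m,m+\ell}:=w^*_\ell(a)$ if $m+\ell\le f$, and $:=w^*_\ell(b)$ if $f\le m$; (U2) $\overline w_{f-\ell,f+1}:=\frac{1-b}{1-a}w^*_{\ell+1}(a)+\frac{b-a}{1-a}w^*_\ell(a)$, $1\le\ell\le f$; (U3) $\overline w_{m,f+2}:=\beta(a,b)\overline w_{m,f+1}-x(a,b)\overline w_{m,f}$, $m\le f-1$; (U4) $\overline w_{m,f+j+1}:=\beta_b\overline w_{m,f+j}-x_b\overline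 w_{m,f+j-1}$, $m\le f-1$, $j\ge2$. Downward: (D1) $\overline w_{m+\ell,m}:=w^*_\ell(a)$ if $m+\ell\le f-1$, and $:=w^*_\ell(b)$ if $f-1\le m$; (D2) $\overline w_{f+j,f-2}:=\frac{1-a}{1-b}w^*_{j+2}(b)+\frac{a-b}{1-b}w^*_{j+1}(b)$, $j\ge0$; (D3) $\overline w_{n,f-3}:=\beta(b,a)\overline w_{n,f-2}-x(b,a)\overline w_{n,f-1}$, $n\ge f$; (D4) $\overline w_{n,f-\ell-2}:=\beta_a\overline w_{n,f-\ell-1}-x_a\overline w_{n,f-\ell}$, $n\ge f$, $\ell\ge2$. (In particular $\overline w_{f-1,f+1}=\omega(a,b)=\overline w_{f,f-2}$.) *)

From HB Require Import structures.
From mathcomp Require Import all_boot all_order all_algebra.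
Set Implicit Arguments. Unset Strict Implicit. Unset Printing Implicit Defensive.
Import Order.TTheory GRing.Theory Num.Theory.
Local Open Scope ring_scope.

Section WbarDefs.
Variable R : fieldType.
Variables (a b : R) (f : nat) (r y z : R).

Definition omega_c (c : R) : R := 1 - (1 - c)^+2 * r^+2 * y^+2 * z^+2.
Definition tau_c (c : R) : R := 1 + (1 - c)^+2 * r^+2 * z^+2 * y * (1 - y).
Definition x_c (c : R) : R := c^+2 * z^+2 * (tau_c c)^+2.
Definition beta_c (c : R) : R :=
  1 + z^+2 * (c^+2 - (1 - c)^+2 * r^+2 * (y^+2 + c^+2 * (1 - y)^+2 * z^+2)).

Fixpoint wstar (c : R) (n : nat) : R :=
  match n with
  | 0%N => (beta_c c - omega_c c) / x_c c
  | 1%N => 1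
  | (n'.+1 as n1).+1 => beta_c c * wstar c n1 - x_c c * wstar c n'
  end.

Definition omega2 (c d : R) : R := 1 - (1 - c) * (1 - d) * r^+2 * y^+2 * z^+2.
Definition tau2 (c d : R) : R := 1 + (1 - c) * (1 - d) * r^+2 * z^+2 * y * (1 - y).
Definition x_ab : R := b^+2 * z^+2 * (tau2 a b)^+2.
Definition x_ba : R := a^+2 * z^+2 * (tau2 a b)^+2.
Definition beta_ab : R := beta_c b - (b - a) * b^+2 * (1 - b) * r^+2 * (1 - y)^+2 * z^+4.
Definition beta_ba : R := beta_c a - (a - b) * a^+2 * (1 - a) * r^+2 * (1 - y)^+2 * z^+4.

Definition wbar_U1 (m n : nat) : R :=
  if n == m.+1 then 1
  else if (n <= f)%N then wstar a (n - m)
  else wstar b (n - m).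

(* (U2): wbar_{m,f+1} for m <= f-1, with l = f - m *)
Definition wbar_U2 (m : nat) : R :=
  let l := (f - m)%N in
  (1 - b) / (1 - a) * wstar a l.+1 + (b - a) / (1 - a) * wstar a l.

(* useq m k = wbar_{m, f+1+k} for m <= f-1, by (U2), (U3), (U4) *)
Fixpoint useq (m k : nat) : R :=
  match k with
  | 0%N => wbar_U2 m
  | 1%N => beta_ab * wbar_U2 m - x_ab * wbar_U1 m f
  | (k'.+1 as k1).+1 => beta_c b * useq m k1 - x_c b * useq m k'
  end.

Definition wbar_up (m n : nat) : R :=
  if n == m.+1 then 1
  else if (n <= f)%N then wstar a (n - m)
  else if (f <= m)%N then wstar b (n - m)
  else useq m (n - f.+1).

(* (D2): wbar_{f+j, f-2}, j >= 0 *)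
Definition wbar_D2 (N : nat) : R :=
  let j := (N - f)%N in
  (1 - a) / (1 - b) * wstar b j.+2 + (a - b) / (1 - b) * wstar b j.+1.

(* wbar_{N, f-1} for N >= f (from (D1) and the convention) *)
Definition wbar_Nfm1 (N : nat) : R :=
  if N == f then 1 else wstar b (N - f.-1).

(* dseq N k = wbar_{N, f-2-k} for N >= f, by (D2), (D3), (D4) *)
Fixpoint dseq (N k : nat) : R :=
  match k with
  | 0%N => wbar_D2 N
  | 1%N => beta_ba * wbar_D2 N - x_ba * wbar_Nfm1 N
  | (k'.+1 as k1).+1 => beta_c a * dseq N k1 - x_c a * dseq N k'
  end.

Definition wbar_dn (N M : nat) : R :=
  if N == M.+1 then 1
  else if (N <= f.-1)%N then wstar a (N - M)
  else if (f.-1 <= M)%N then wstar b (N - M)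
  else dseq N (f.-2 - M).

(* wbar_{m,n} for m <> n (value 0 on the unused diagonal) *)
Definition wbar (m n : nat) : R :=
  if (m < n)%N then wbar_up m n
  else if (n < m)%N then wbar_dn m n
  else 0.

Definition wbrk (m n : nat) : R :=
  wbar m n * wbar m.+1 n.+1 - wbar m n.+1 * wbar m.+1 n.

End WbarDefs.

From HB Require Import structures.
From mathcomp Require Import all_boot all_order all_algebra.
From mathcomp Require Import ring zify.
Import Order.TTheory GRing.Theory Num.Theory.
Local Open Scope ring_scope.

(* Along each row m, the map n |-> wbar_{m,n} solves (from some column on) a
   second-order recurrence u_{k+2} = beta u_{k+1} - x u_k, and the bracket
   [wbar]_{m,n} is the Casoratian of rows m and m+1 at column n.  The
   Casoratian of two solutions of such a recurrence gets multiplied by x at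
   each step, so every bracket is a power of x_a or x_b times an initial
   Casoratian; the latter are polynomial identities in a, b, r, y, z, the
   one across column f+1 being x(a,b) times the bracket ending at column f. *)

Section Casoratian.
Variable R : comPzRingType.

Definition casoratian (u v : nat -> R) (k : nat) : R := u k * v k.+1 - u k.+1 * v k.

Lemma casoratian_linrec (be x : R) (u v : nat -> R) :
  (forall k, u k.+2 = be * u k.+1 - x * u k) ->
  (forall k, v k.+2 = be * v k.+1 - x * v k) ->
  forall j, casoratian u v j = x ^+ j * casoratian u v 0.
Proof.
move=> recu recv; elim=> [|j IH]; first by rewrite mul1r.
by rewrite exprS -mulrA -IH /casoratian recu recv; ring.
Qed.

End Casoratian.

Arguments casoratian {R} u v k.
Arguments casoratian_linrec {R be x u v}.

Section Wstar.
Variables (R : fieldType) (r y z : R).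

Local Notation ws := (wstar r y z).
Local Notation X c := (x_c r y z c).

Lemma wstarSS c n : ws c n.+2 = beta_c r y z c * ws c n.+1 - X c * ws c n.
Proof. by case: n. Qed.

Lemma wstar2 c : X c != 0 -> ws c 2 = omega_c r y z c.
Proof. by move=> Xc_neq0; rewrite wstarSS /=; field. Qed.

Lemma wstar_casoratian c n : X c != 0 ->
  ws c n.+2 ^+ 2 - ws c n.+3 * ws c n.+1 =
  c ^+ 2 * r ^+ 2 * z ^+ 4 * (1 - c) ^+ 2 * X c ^+ n.
Proof.
move=> Xc_neq0.
have := casoratian_linrec (fun k => wstarSS c k.+1) (fun k => wstarSS c k.+2) n.
rewrite /casoratian [ws c 3]wstarSS wstar2 // (_ : ws c 1 = 1) // => cas.
transitivity (- (ws c n.+1 * ws c n.+3 - ws c n.+2 * ws c n.+2)); first by ring.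
by rewrite cas /omega_c /beta_c /x_c /tau_c; ring.
Qed.

End Wstar.

Section Wbar.
Variables (R : fieldType) (a b : R) (f : nat) (r y z : R).
Hypotheses (Xa_neq0 : x_c r y z a != 0) (Xb_neq0 : x_c r y z b != 0).
Hypothesis subr1a_neq0 : 1 - a != 0.

Local Notation ws := (wstar r y z).
Local Notation X c := (x_c r y z c).
Local Notation W := (wbar a b f r y z).
Local Notation U := (useq a b f r y z).
Local Notation WB := (wbrk a b f r y z).

Lemma useqSS m k : U m k.+2 = beta_c r y z b * U m k.+1 - X b * U m k.
Proof. by case: k. Qed.

Lemma wbrk_casoratian m n : WB m n = casoratian (W m) (W m.+1) n.
Proof. by []. Qed.

Lemma wbar_lowE m n k : (m < n)%N -> (n <= f)%N -> (n - m = k)%N -> W m n = ws a k.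
Proof.
move=> lt_mn le_nf <-; rewrite /wbar lt_mn /wbar_up le_nf.
by case: eqP => [->|]; rewrite ?subSnn.
Qed.

Lemma wbar_highE m n k : (f <= m)%N -> (m < n)%N -> (n - m = k)%N -> W m n = ws b k.
Proof.
move=> le_fm lt_mn <-; rewrite /wbar lt_mn /wbar_up le_fm.
case: eqP => [->|_]; first by rewrite subSnn.
by have -> : (n <= f)%N = false by lia.
Qed.

Lemma wbar_crossE m n k : (m < f)%N -> (f < n)%N -> (n - f.+1 = k)%N -> W m n = U m k.
Proof.
move=> lt_mf lt_fn <-; rewrite /wbar /wbar_up.
have -> : (m < n)%N by lia.
have -> : (n == m.+1) = false by apply/eqP; lia.
have -> : (n <= f)%N = false by lia.
by have -> : (f <= m)%N = false by lia.
Qed.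

Lemma useq0 m :
  U m 0 = (1 - b) / (1 - a) * ws a (f - m).+1 + (b - a) / (1 - a) * ws a (f - m).
Proof. by []. Qed.

Lemma useq1 m : (m < f)%N ->
  U m 1 = beta_ab a b r y z * U m 0 - x_ab a b r y z * ws a (f - m).
Proof.
move=> lt_mf; rewrite /= /wbar_U1; case: eqP => [->|_]; first by rewrite subSnn.
by rewrite leqnn.
Qed.

Lemma wbrk_f l : (l.+2 <= f)%N ->
  WB (f - l.+2) f = a ^+ 2 * r ^+ 2 * z ^+ 4 * (1 - a) * (1 - b) * X a ^+ l.
Proof.
move=> le_lf; rewrite /wbrk.
rewrite (wbar_lowE (f - l.+2) f l.+2); try lia.
rewrite (wbar_lowE (f - l.+2).+1 f l.+1); try lia.
rewrite (wbar_crossE (f - l.+2).+1 f.+1 0); try lia.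
rewrite (wbar_crossE (f - l.+2) f.+1 0); try lia.
rewrite !useq0 (_ : (f - (f - l.+2))%N = l.+2); last lia.
rewrite (_ : (f - (f - l.+2).+1)%N = l.+1); last lia.
transitivity ((1 - b) / (1 - a) * (ws a l.+2 ^+ 2 - ws a l.+3 * ws a l.+1)).
  by ring.
by rewrite wstar_casoratian //; field.
Qed.

Lemma useq_casoratian m j : (m.+1 < f)%N ->
  casoratian (U m) (U m.+1) j = X b ^+ j * x_ab a b r y z * WB m f.
Proof.
move=> lt_mf; rewrite (casoratian_linrec (useqSS m) (useqSS m.+1)) -mulrA.
congr (_ * _); rewrite /casoratian !useq1; try lia.
rewrite /wbrk (wbar_lowE m f (f - m)); try lia.
rewrite (wbar_lowE m.+1 f (f - m.+1)); try lia.
rewrite (wbar_crossE m f.+1 0); try lia.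
rewrite (wbar_crossE m.+1 f.+1 0); try lia.
by ring.
Qed.

Lemma wbrk_fj l j : (l.+2 <= f)%N ->
  WB (f - l.+2) (f + j.+1) = a ^+ 2 * r ^+ 2 * z ^+ 4 * (1 - a) * (1 - b) * X a ^+ l
    * x_ab a b r y z * X b ^+ j.
Proof.
move=> le_lf; rewrite wbrk_casoratian /casoratian.
rewrite (wbar_crossE (f - l.+2) (f + j.+1) j); try lia.
rewrite (wbar_crossE (f - l.+2).+1 (f + j.+1).+1 j.+1); try lia.
rewrite (wbar_crossE (f - l.+2) (f + j.+1).+1 j.+1); try lia.
rewrite (wbar_crossE (f - l.+2).+1 (f + j.+1) j); try lia.
have lt_mf : ((f - l.+2).+1 < f)%N by lia.
have := useq_casoratian (f - l.+2) j lt_mf; rewrite /casoratian => ->.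
by rewrite wbrk_f //; ring.
Qed.

Lemma wbrk_pred_f j : (0 < f)%N ->
  WB f.-1 (f + j.+1) = b ^+ 2 * r ^+ 2 * z ^+ 4 * (1 - a) * (1 - b) * X b ^+ j.
Proof.
move=> f_gt0; rewrite wbrk_casoratian /casoratian.
rewrite (wbar_crossE f.-1 (f + j.+1) j); try lia.
rewrite (wbar_crossE f.-1 (f + j.+1).+1 j.+1); try lia.
rewrite (wbar_highE f.-1.+1 (f + j.+1).+1 j.+2); try lia.
rewrite (wbar_highE f.-1.+1 (f + j.+1) j.+1); try lia.
have := casoratian_linrec (useqSS f.-1) (fun k => wstarSS _ r y z b k.+1) j.
rewrite /casoratian => ->; rewrite mulrC; congr (_ * _).
rewrite useq1; last lia.
rewrite useq0 (_ : (f - f.-1)%N = 1%N); last lia.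
rewrite !wstar2 // (_ : ws a 1 = 1) // (_ : ws b 1 = 1) //.
by rewrite /omega_c /beta_ab /beta_c /x_ab /tau2; field.
Qed.

Lemma wbrk_low m l : (m + l.+3 <= f)%N ->
  WB m (m + l.+2) = a ^+ 2 * r ^+ 2 * z ^+ 4 * (1 - a) ^+ 2 * X a ^+ l.
Proof.
move=> le_mlf; rewrite /wbrk.
rewrite (wbar_lowE m (m + l.+2) l.+2); try lia.
rewrite (wbar_lowE m.+1 (m + l.+2).+1 l.+2); try lia.
rewrite (wbar_lowE m (m + l.+2).+1 l.+3); try lia.
rewrite (wbar_lowE m.+1 (m + l.+2) l.+1); try lia.
by rewrite -expr2 wstar_casoratian.
Qed.

Lemma wbrk_high m j : (f <= m)%N ->
  WB m (m + j.+2) = b ^+ 2 * r ^+ 2 * z ^+ 4 * (1 - b) ^+ 2 * X b ^+ j.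
Proof.
move=> le_fm; rewrite /wbrk.
rewrite (wbar_highE m (m + j.+2) j.+2); try lia.
rewrite (wbar_highE m.+1 (m + j.+2).+1 j.+2); try lia.
rewrite (wbar_highE m (m + j.+2).+1 j.+3); try lia.
rewrite (wbar_highE m.+1 (m + j.+2) j.+1); try lia.
by rewrite -expr2 wstar_casoratian.
Qed.

End Wbar.

Theorem proposition2 (R : realFieldType) (a b : R) (f : nat) (r y z : R) :
  0 < a < 1 -> 0 < b < 1 -> (3 <= f)%N ->
  x_c r y z a != 0 -> x_c r y z b != 0 ->
  let W := wbrk a b f r y z in
  (* 1 *)
  (forall l j : nat, (2 <= l)%N -> (l <= f)%N -> (1 <= j)%N ->
     W (f - l)%N (f + j)%N =
     a^+2 * r^+2 * z^+4 * (1 - a) * (1 - b) * (x_c r y z a) ^+ (l - 2)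
       * x_ab a b r y z * (x_c r y z b) ^+ (j - 1)) /\
  (* 2 *)
  (forall l : nat, (2 <= l)%N -> (l <= f)%N ->
     W (f - l)%N f =
     a^+2 * r^+2 * z^+4 * (1 - a) * (1 - b) * (x_c r y z a) ^+ (l - 2)) /\
  (* 3 *)
  (forall j : nat, (1 <= j)%N ->
     W f.-1 (f + j)%N =
     b^+2 * r^+2 * z^+4 * (1 - a) * (1 - b) * (x_c r y z b) ^+ (j - 1)) /\
  (* 4 *)
  (forall m l : nat, (2 <= l)%N -> (m + l <= f.-1)%N ->
     W m (m + l)%N =
     a^+2 * r^+2 * z^+4 * (1 - a)^+2 * (x_c r y z a) ^+ (l - 2)) /\
  (* 5 *)
  (forall m j : nat, (f <= m)%N -> (2 <= j)%N ->
     W m (m + j)%N =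
     b^+2 * r^+2 * z^+4 * (1 - b)^+2 * (x_c r y z b) ^+ (j - 2)).
Proof.
move=> /andP[_ lt_a1] _ le3f Xa_neq0 Xb_neq0 W.
have subr1a_neq0 : 1 - a != 0 by rewrite subr_eq0 eq_sym lt_eqF.
split; last split; last split; last split.
- move=> [|[|l]] [|j] // _ le_lf _; rewrite !subSS !subn0; exact: wbrk_fj.
- move=> [|[|l]] // _ le_lf; rewrite !subSS !subn0; exact: wbrk_f.
- move=> [|j] // _; rewrite subSS subn0; apply: wbrk_pred_f => //; lia.
- move=> m [|[|l]] // _ le_mlf; rewrite !subSS !subn0; apply: wbrk_low => //; lia.
- move=> m [|[|j]] // le_fm _; rewrite !subSS !subn0; exact: wbrk_high.
Qed.
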